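(* Let $A,B\in\mathbb F^{n\times n}$ with $A$ Lyapunov regular and $B\in\mathcal C_{\mathcal L}(A)\cap\{A\}''_{\mathbb F}$, and let $C_1,\dots,C_m$ be the matrices of a minimal Hill representation of $\mathcal L_{A,B}$ (they lie in $\{A^*\}''_{\mathbb F}$). Assume $\operatorname{span}\{C_1,\dots,C_m,I_n\}=\{A^*\}''_{\mathbb F}$. Then $\ker L_{\mathbf R}\subseteq\ker M_{\mathbf R}$ for every finite collection $\mathbf R\subset\mathbb F^{n\times n}$. In particular this holds when $m=\dim\{A\}''_{\mathbb F}$.
   Context: $\mathbb F=\mathbb R$ or $\mathbb C$; $\otimes$ Kronecker product. $A$ Lyapunov regular: eigenvalues satisfy $\lambda_i+\bar\lambda_j\ne0$. $\mathcal L_Y(X)=XY+Y^*X$, $\mathcal L_{A,B}=\mathcal L_B\circ\mathcal L_A^{-1}$. $\{A\}''_{\mathbb F}$ bicommutant of $A$ in $\mathbb F^{n\times n}$; $\overline{\mathcal H}(A)=\{H\text{ Hermitian}:HA+A^*H\succeq0\}$, $\mathcal C_{\mathcal L}(A)=\{B:\overline{\mathcal H}(A)\subseteq\overline{\mathcal H}(B)\}$. Let $\mathcal L_{A,B}(V)=\sum_{k,l=1}^m\mathbb H_{kl}C_kVC_l^*$ be a minimal Hill representation (smallest possible $m$) with Hill matrix $\mathbb H$; under the hypotheses $\mathbb H$ is positive definite; fix an invertible $P\in\mathbb F^{m\times m}$ with $\mathbb H=P^*P$. Set $\mathbf C=\begin{bmatrix}C_1^*\\\vdots\\C_m^*\end{bmatrix}$,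 $L_R=\begin{bmatrix}R\\(P\otimes R)\mathbf C\end{bmatrix}$, $M_R=\begin{bmatrix}RB\\-(P\otimes RA)\mathbf C\end{bmatrix}$. For a finite collection $\mathbf R=\{R_1,\dots,R_k\}$ set $L_{\mathbf R}=[L_{R_1}\ \cdots\ L_{R_k}]$, $M_{\mathbf R}=[M_{R_1}\ \cdots\ M_{R_k}]$. *)

From HB Require Import structures.
From mathcomp Require Import all_boot all_order all_algebra.
From mathcomp Require Export mxtens.
Set Implicit Arguments. Unset Strict Implicit. Unset Printing Implicit Defensive.
Import Order.TTheory GRing.Theory Num.Theory.
Local Open Scope ring_scope.

(* The ambient field is an (abstract) numeric algebraically closed field C
   (playing the role of the complex numbers).  The scalar field F is
   F = C when [realF = false] and F = the real numbers of C when [realF = true]. *)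

Section Defs.
Variable C : numClosedFieldType.
Variable realF : bool.

Definition inF (x : C) : bool := ~~ realF || (x \is Num.real).

Definition mxF {p q} (M : 'M[C]_(p, q)) : Prop := forall i j, inF (M i j).

Definition mxstar {p q} (M : 'M[C]_(p, q)) : 'M[C]_(q, p) := map_mx Num.conj M^T.

Definition lyap_regular {n} (A : 'M[C]_n) : Prop :=
  forall l1 l2, eigenvalue A l1 -> eigenvalue A l2 -> l1 + Num.conj l2 != 0.

Definition lyap {n} (Y X : 'M[C]_n) : 'M[C]_n := X *m Y + mxstar Y *m X.

Definition lyap_inv {n} (A V : 'M[C]_n) : 'M[C]_n :=
  vec_mx (mxvec V *m invmx (lin_mx (lyap A))).

Definition lyapAB {n} (A B V : 'M[C]_n) : 'M[C]_n := lyap B (lyap_inv A V).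

Definition bicomm {n} (A X : 'M[C]_n) : Prop :=
  mxF X /\ forall Y : 'M[C]_n, mxF Y -> Y *m A = A *m Y -> X *m Y = Y *m X.

Definition hermitian {n} (H : 'M[C]_n) : Prop := mxstar H = H.

Definition psd {n} (M : 'M[C]_n) : Prop :=
  forall x : 'cV[C]_n, mxF x -> 0 <= (mxstar x *m M *m x) 0 0.

Definition Hbar {n} (A H : 'M[C]_n) : Prop :=
  mxF H /\ hermitian H /\ psd (lyap A H).

Definition CL {n} (A B : 'M[C]_n) : Prop := forall H, Hbar A H -> Hbar B H.

Definition hill_rep {n m} (Phi : 'M[C]_n -> 'M[C]_n)
    (H : 'M[C]_m) (Cs : 'I_m -> 'M[C]_n) : Prop :=
  mxF H /\ (forall k, mxF (Cs k)) /\
  forall V : 'M[C]_n, mxF V ->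
    Phi V = \sum_(k < m) \sum_(l < m) H k l *: (Cs k *m V *m mxstar (Cs l)).

Definition min_hill_rep {n m} (Phi : 'M[C]_n -> 'M[C]_n)
    (H : 'M[C]_m) (Cs : 'I_m -> 'M[C]_n) : Prop :=
  hill_rep Phi H Cs /\
  forall m' (H' : 'M[C]_m') (Cs' : 'I_m' -> 'M[C]_n), hill_rep Phi H' Cs' -> (m <= m')%N.

Definition in_span_CI {n m} (Cs : 'I_m -> 'M[C]_n) (X : 'M[C]_n) : Prop :=
  exists (c : 'I_m -> C) (d : C), (forall k, inF (c k)) /\ inF d /\
    X = \sum_(k < m) c k *: Cs k + d%:M.

Definition dimF_is {n} (S : 'M[C]_n -> Prop) (d : nat) : Prop :=
  exists Bs : 'I_d -> 'M[C]_n, (forall k, S (Bs k)) /\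
    (forall c : 'I_d -> C, (forall k, inF (c k)) ->
        \sum_(k < d) c k *: Bs k = 0 -> forall k, c k = 0) /\
    (forall X, S X -> exists c : 'I_d -> C, (forall k, inF (c k)) /\
        X = \sum_(k < d) c k *: Bs k).

(* bold C: the (m n) x n matrix stacking C_1^*, ..., C_m^* *)
Definition stackC {n m} (Cs : 'I_m -> 'M[C]_n) : 'M[C]_(m * n, n) :=
  \matrix_(r, c) mxstar (Cs (mxtens_unindex r).1) (mxtens_unindex r).2 c.

Definition LR {n m} (P : 'M[C]_m) (Cs : 'I_m -> 'M[C]_n) (R : 'M[C]_n)
  : 'M[C]_(n + m * n, n) := col_mx R ((P *t R) *m stackC Cs).

Definition MR {n m} (A B : 'M[C]_n) (P : 'M[C]_m) (Cs : 'I_m -> 'M[C]_n)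
    (R : 'M[C]_n) : 'M[C]_(n + m * n, n) :=
  col_mx (R *m B) (- ((P *t (R *m A)) *m stackC Cs)).

Definition LRs {n m k} (P : 'M[C]_m) (Cs : 'I_m -> 'M[C]_n)
    (Rs : 'I_k -> 'M[C]_n) := \mxrow_(j < k) LR P Cs (Rs j).

Definition MRs {n m k} (A B : 'M[C]_n) (P : 'M[C]_m) (Cs : 'I_m -> 'M[C]_n)
    (Rs : 'I_k -> 'M[C]_n) := \mxrow_(j < k) MR A B P Cs (Rs j).

End Defs.

(* Split x into blocks x_j and put T(X) = \sum_j R_j X x_j, a linear map. The two
   block rows of L_R x = 0 say T(I) = 0 and (P (x) I) [T(C_l^* )]_l = 0, hence
   T(C_l^* ) = 0 as P is invertible; the block rows of M_R x are T(B) and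
   -(P (x) I) [T(A C_l^* )]_l. So it suffices that B and every A C_l^* lie in
   span {C_1^*, ..., C_m^*, I}, i.e. that each C_l^* lies in {A}'' and {A}'' lies in
   that span. Under the span hypothesis both follow by conjugation. Otherwise,
   minimality of the Hill representation makes C_1, ..., C_m linearly independent,
   which settles the span by counting dimensions; and for Y commuting with A^*
   (hence with B^* ) the two Hill expansions of L_{A,B}(Y V) = Y L_{A,B}(V) give
   \sum_{k,l} H_kl (C_k Y - Y C_k) V C_l^* = 0 for all V, which forces C_k Y = Y C_k
   because H = P^* P is invertible. *)

From HB Require Import structures.
From mathcomp Require Import all_boot all_order all_algebra ring.
Import Order.TTheory GRing.Theory Num.Theory.
Local Open Scope ring_scope.
Set Implicit Arguments. Unset Strict Implicit. Unset Printing Implicit Defensive.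

Section ConjTranspose.
Variable C : numClosedFieldType.

Lemma mxstarE p q (X : 'M[C]_(p, q)) i j : mxstar X i j = (X j i)^*.
Proof. by rewrite !mxE. Qed.

Lemma mxstarK p q (X : 'M[C]_(p, q)) : mxstar (mxstar X) = X.
Proof. by apply/matrixP=> i j; rewrite !mxstarE conjCK. Qed.

Lemma mxstarM p q s (X : 'M[C]_(p, q)) (Y : 'M[C]_(q, s)) :
  mxstar (X *m Y) = mxstar Y *m mxstar X.
Proof. by rewrite /mxstar trmx_mul map_mxM. Qed.

Lemma mxstarD p q (X Y : 'M[C]_(p, q)) : mxstar (X + Y) = mxstar X + mxstar Y.
Proof. by apply/matrixP=> i j; rewrite !mxE rmorphD. Qed.

Lemma mxstarZ p q a (X : 'M[C]_(p, q)) : mxstar (a *: X) = a^* *: mxstar X.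
Proof. by apply/matrixP=> i j; rewrite !mxE rmorphM. Qed.

Lemma mxstar0 p q : mxstar (0 : 'M[C]_(p, q)) = 0.
Proof. by apply/matrixP=> i j; rewrite !mxE rmorph0. Qed.

Lemma mxstar_sum p q (I : finType) (F : I -> 'M[C]_(p, q)) :
  mxstar (\sum_i F i) = \sum_i mxstar (F i).
Proof.
apply: (big_ind2 (fun X Y => mxstar X = Y)) => //; first exact: mxstar0.
by move=> X1 X2 Y1 Y2 <- <-; rewrite mxstarD.
Qed.

Lemma mxstar_scalar n (d : C) : mxstar (d%:M : 'M_n) = d^*%:M.
Proof. by apply/matrixP=> i j; rewrite !mxE eq_sym rmorphMn. Qed.

Lemma mxstar_comm n (X Y : 'M[C]_n) :
  X *m Y = Y *m X -> mxstar X *m mxstar Y = mxstar Y *m mxstar X.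
Proof. by rewrite -!mxstarM => ->. Qed.

Lemma unitmx_star n (X : 'M[C]_n) : (mxstar X \in unitmx) = (X \in unitmx).
Proof. by rewrite !unitmxE det_map_mx det_tr !unitfE conjC_eq0. Qed.

End ConjTranspose.

Section ScalarField.
Variables (C : numClosedFieldType) (r : bool).

Lemma inF0 : inF r (0 : C).
Proof. by case: r; rewrite /inF //= real0. Qed.

Lemma inF_nat k : inF r (k%:R : C).
Proof. by case: r; rewrite /inF //= realn. Qed.

Lemma inF_conj (x : C) : inF r x -> inF r x^*.
Proof. by rewrite /inF CrealJ. Qed.

Lemma inF_opp (x : C) : inF r x -> inF r (- x).
Proof. by case: r; rewrite /inF //= realN. Qed.

Lemma inF_inv (x : C) : inF r x -> inF r x^-1.
Proof. by case: r; rewrite /inF //= realV. Qed.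

Lemma inF_add (x y : C) : inF r x -> inF r y -> inF r (x + y).
Proof. by case: r; rewrite /inF //=; apply: rpredD. Qed.

Lemma inF_mul (x y : C) : inF r x -> inF r y -> inF r (x * y).
Proof. by case: r; rewrite /inF //=; apply: rpredM. Qed.

Lemma inF_sum (I : finType) (F : I -> C) :
  (forall i, inF r (F i)) -> inF r (\sum_i F i).
Proof. by move=> hF; apply: (big_ind (inF r)); [exact: inF0 | exact: inF_add |]. Qed.

Lemma mxF_star p q (X : 'M[C]_(p, q)) : mxF r X -> mxF r (mxstar X).
Proof. by move=> hX i j; rewrite mxstarE inF_conj. Qed.

Lemma mxF_mul p q s (X : 'M[C]_(p, q)) (Y : 'M[C]_(q, s)) :
  mxF r X -> mxF r Y -> mxF r (X *m Y).
Proof. by move=> hX hY i j; rewrite mxE inF_sum // => k; rewrite inF_mul. Qed.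

Lemma mxF_sub p q (X Y : 'M[C]_(p, q)) : mxF r X -> mxF r Y -> mxF r (X - Y).
Proof. by move=> hX hY i j; rewrite !mxE inF_add ?inF_opp. Qed.

Lemma mxF_delta p q (a : 'I_p) (b : 'I_q) : mxF r (delta_mx a b : 'M[C]_(p, q)).
Proof. by move=> i j; rewrite mxE inF_nat. Qed.

Definition freeF n m (Bs : 'I_m -> 'M[C]_n) : Prop :=
  forall c : 'I_m -> C, (forall k, inF r (c k)) ->
    \sum_k c k *: Bs k = 0 -> forall k, c k = 0.

Lemma freeF_star n m (Bs : 'I_m -> 'M[C]_n) :
  freeF Bs -> freeF (fun k => mxstar (Bs k)).
Proof.
move=> hB c hc hs k; rewrite -[c k]conjCK (hB (fun k => (c k)^*)) ?rmorph0 //.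
  by move=> l; rewrite inF_conj.
rewrite -[LHS]mxstarK mxstar_sum.
by under eq_bigr do rewrite mxstarZ conjCK; rewrite hs mxstar0.
Qed.

Lemma bicomm_star n (A X : 'M[C]_n) :
  bicomm r A X -> bicomm r (mxstar A) (mxstar X).
Proof.
move=> [hX cX]; split=> [|Y hY hYA]; first exact: mxF_star.
have hYA' : mxstar Y *m A = A *m mxstar Y.
  by rewrite -[A]mxstarK; apply: mxstar_comm.
by rewrite -[Y]mxstarK; apply/mxstar_comm/cX => //; exact: mxF_star.
Qed.

Lemma bicomm_starK n (A X : 'M[C]_n) :
  bicomm r (mxstar A) X -> bicomm r A (mxstar X).
Proof. by move=> /bicomm_star; rewrite mxstarK. Qed.

Lemma bicomm_refl n (A : 'M[C]_n) : mxF r A -> bicomm r A A.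
Proof. by move=> hA; split=> // Y _ ->. Qed.

Lemma bicomm_mul n (A X Z : 'M[C]_n) :
  bicomm r A X -> bicomm r A Z -> bicomm r A (X *m Z).
Proof.
move=> [hX cX] [hZ cZ]; split; first exact: mxF_mul.
by move=> Y hY hYA; rewrite -mulmxA cZ // !mulmxA cX.
Qed.

End ScalarField.

Section Dimension.
Variables (C : numClosedFieldType) (r : bool).

Lemma map_mxM_real (f : {additive C -> C}) m p (u : 'rV[C]_m) (T : 'M[C]_(m, p)) :
  {in Num.real, forall x, {morph f : z / z * x}} -> mxF true T ->
  map_mx f (u *m T) = map_mx f u *m T.
Proof.
move=> fM hT; apply/rowP=> j; rewrite !mxE raddf_sum.
by apply: eq_bigr => k _; rewrite mxE fM //; apply: hT.
Qed.

Lemma mxF_free_unitmx m (T : 'M[C]_m) :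
  mxF r T -> (forall v : 'rV_m, mxF r v -> v *m T = 0 -> v = 0) -> T \in unitmx.
Proof.
(* Over the reals, the real and imaginary parts of a complex kernel vector of T
   are real kernel vectors of T. *)
move=> hT hfree; rewrite unitmxE unitfE; apply/negP => /det0P [u /negP u_neq0 uT0].
apply: u_neq0; apply/eqP; case: r hT hfree => hT hfree; last exact: hfree.
have partT0 (f : {additive C -> C}) : {in Num.real, forall x, {morph f : z / z * x}} ->
    (forall z, f z \is Num.real) -> map_mx f u = 0.
  move=> fM freal; apply: hfree => [i j|]; first by rewrite mxE /inF freal.
  by rewrite -map_mxM_real // uT0 map_mx0.
have /rowP reu := partT0 _ (@ReMr C) (@Creal_Re C).
have /rowP imu := partT0 _ (@ImMr C) (@Creal_Im C).
apply/rowP=> k; have := reu k; have := imu k.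
by rewrite [u 0 k]Crect !mxE => -> ->; rewrite mulr0 addr0.
Qed.

Lemma dimF_span n m (S : 'M[C]_n -> Prop) (Ds : 'I_m -> 'M[C]_n) :
  dimF_is r S m -> (forall k, S (Ds k)) -> freeF r Ds ->
  forall X, S X -> exists c : 'I_m -> C, X = \sum_k c k *: Ds k.
Proof.
move=> [Bs [_ [Bs_free Bs_span]]] SDs Ds_free.
have [coord coordP] := fin_all_exists (fun k => Bs_span _ (SDs k)).
pose T : 'M[C]_m := \matrix_(k, j) coord k j.
have combT (v : 'rV_m) : \sum_k v 0 k *: Ds k = \sum_j (v *m T) 0 j *: Bs j.
  under eq_bigr do rewrite (proj2 (coordP _)) scaler_sumr.
  rewrite exchange_big; apply: eq_bigr => j _; rewrite mxE scaler_suml.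
  by apply: eq_bigr => k _; rewrite scalerA mxE.
have T_unit : T \in unitmx.
  apply: mxF_free_unitmx => [k j|v vF vT0]; first by rewrite mxE (proj1 (coordP k)).
  apply/rowP=> k; rewrite mxE; apply: (Ds_free (fun k => v 0 k)) => [{}k|].
  - exact: vF.
  - by rewrite combT vT0; apply: big1 => j _; rewrite mxE scale0r.
move=> X /Bs_span [c [_ ->]].
exists (fun k => (\row_j c j *m invmx T) 0 k); rewrite combT mulmxKV //.
by apply: eq_bigr => j _; rewrite mxE.
Qed.

End Dimension.

Section Lyapunov.
Variable C : numClosedFieldType.

Lemma mxvec_lyap n (A X : 'M[C]_n) :
  mxvec X *m lin_mx (lyap A) = mxvec (lyap A X).
Proof. by rewrite (_ : lyap A = mulmxr A \+ mulmx (mxstar A)) // mul_vec_lin. Qed.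

Lemma lyap_mull n (A Y X : 'M[C]_n) :
  Y *m mxstar A = mxstar A *m Y -> lyap A (Y *m X) = Y *m lyap A X.
Proof. by move=> YA; rewrite /lyap mulmxDr !mulmxA YA. Qed.

(* If L_A is singular, [invmx] returns [lin_mx (lyap A)] itself, so [lyap_inv A]
   is then [lyap A]: either way it commutes with Y, without Lyapunov regularity. *)
Lemma lyap_inv_mull n (A Y V : 'M[C]_n) :
  Y *m mxstar A = mxstar A *m Y -> lyap_inv A (Y *m V) = Y *m lyap_inv A V.
Proof.
move=> YA; rewrite /lyap_inv; set M := lin_mx (lyap A).
have [M_unit|M_sing] := boolP (M \in unitmx); last first.
  by rewrite (invmx_out M_sing) !mxvec_lyap !mxvecK lyap_mull.
have lyapK W : lyap A (vec_mx (mxvec W *m invmx M)) = W.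
  by apply: (can_inj (@mxvecK _ _ _)); rewrite -mxvec_lyap vec_mxK mulmxKV.
have lyap_inj X1 X2 : lyap A X1 = lyap A X2 -> X1 = X2.
  move=> eq12; apply: (can_inj (@mxvecK _ _ _)).
  by rewrite -(mulmxK M_unit (mxvec X1)) -(mulmxK M_unit (mxvec X2)) !mxvec_lyap eq12.
by apply: lyap_inj; rewrite lyapK lyap_mull // lyapK.
Qed.

Lemma lyapAB_mull n (A B Y V : 'M[C]_n) :
  Y *m mxstar A = mxstar A *m Y -> Y *m mxstar B = mxstar B *m Y ->
  lyapAB A B (Y *m V) = Y *m lyapAB A B V.
Proof. by move=> YA YB; rewrite /lyapAB lyap_inv_mull // lyap_mull. Qed.

End Lyapunov.

Section HillRepresentation.
Variables (C : numClosedFieldType) (r : bool).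

Lemma hill_rep_subst n m m' (Phi : 'M[C]_n -> 'M[C]_n) (H : 'M[C]_m)
    (Cs : 'I_m -> 'M[C]_n) (T : 'M[C]_(m, m')) (Cs' : 'I_m' -> 'M[C]_n) :
  hill_rep r Phi H Cs -> mxF r T -> (forall k, mxF r (Cs' k)) ->
  (forall k, Cs k = \sum_i T k i *: Cs' i) ->
  hill_rep r Phi (T^T *m H *m map_mx Num.conj T) Cs'.
Proof.
move=> [HF [_ PhiE]] TF Cs'F CsE; split.
  apply: mxF_mul; first by apply: mxF_mul => // i j; rewrite mxE.
  by move=> i j; rewrite mxE inF_conj.
split=> // V VF; rewrite PhiE //.
have termE k l : Cs k *m V *m mxstar (Cs l) =
    \sum_i \sum_j (T k i * (T l j)^*) *: (Cs' i *m V *m mxstar (Cs' j)).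
  rewrite !CsE mxstar_sum !mulmx_suml; apply: eq_bigr => i _.
  rewrite mulmx_sumr; apply: eq_bigr => j _.
  by rewrite mxstarZ -!scalemxAl -scalemxAr scalerA.
under eq_bigr do under eq_bigr do rewrite termE scaler_sumr.
under eq_bigr do under eq_bigr do under eq_bigr do rewrite scaler_sumr.
under [RHS]eq_bigr do under eq_bigr do rewrite !mxE scaler_suml.
under [RHS]eq_bigr do under eq_bigr do under eq_bigr do
  rewrite !mxE mulr_suml scaler_suml.
under eq_bigr do rewrite exchange_big /=.
rewrite exchange_big /=; apply: eq_bigr => i _.
under eq_bigr do rewrite exchange_big /=.
rewrite exchange_big /=; apply: eq_bigr => j _.
rewrite exchange_big /=; apply: eq_bigr => l _; apply: eq_bigr => k _.
by rewrite !mxE scalerA; congr (_ *: _); ring.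
Qed.

(* A relation [\sum_k c k *: Cs k = 0] with [c l0 != 0] expresses [Cs l0] through
   the other terms; substituting it removes one term of the representation. *)
Lemma hill_rep_drop n m (Phi : 'M[C]_n -> 'M[C]_n) (H : 'M[C]_m.+1)
    (Cs : 'I_m.+1 -> 'M[C]_n) (c : 'I_m.+1 -> C) (l0 : 'I_m.+1) :
  hill_rep r Phi H Cs -> (forall k, inF r (c k)) ->
  \sum_k c k *: Cs k = 0 -> c l0 != 0 ->
  exists (H' : 'M[C]_m) (Cs' : 'I_m -> 'M[C]_n), hill_rep r Phi H' Cs'.
Proof.
move=> rep cF rel cl0; have [_ [CsF _]] := rep.
pose a (i : 'I_m) := - c (lift l0 i) / c l0.
pose T : 'M[C]_(m.+1, m) :=
  \matrix_(k, i) if unlift l0 k is Some j then (j == i)%:R else a i.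
exists (T^T *m H *m map_mx Num.conj T), (fun i => Cs (lift l0 i)).
apply: hill_rep_subst rep _ _ _ => // [k i|k].
  rewrite mxE; case: (unlift l0 k) => [j|]; first exact: inF_nat.
  by rewrite inF_mul ?inF_opp ?inF_inv.
case: (unliftP l0 k) => [j ->|->].
  under eq_bigr do rewrite mxE liftK.
  rewrite (bigD1 j) //= eqxx scale1r big1 ?addr0 // => i /negbTE.
  by rewrite eq_sym => ->; rewrite scale0r.
under eq_bigr do rewrite mxE unlift_none.
move: rel; rewrite (bigD1_ord l0) //= => /eqP; rewrite addr_eq0 => /eqP rel.
apply: (scalerI cl0); rewrite rel scaler_sumr -sumrN; apply: eq_bigr => i _.
by rewrite /a scalerA mulrCA mulfV // mulr1 scaleNr.
Qed.

Lemma min_hill_rep_free n m (Phi : 'M[C]_n -> 'M[C]_n) (H : 'M[C]_m)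
    (Cs : 'I_m -> 'M[C]_n) :
  min_hill_rep r Phi H Cs -> freeF r Cs.
Proof.
case: m H Cs => [|m] H Cs [rep minimal] c cF rel k; first by case: k.
apply/eqP; apply: contraT => ck.
have [H' [Cs' rep']] := hill_rep_drop rep cF rel ck.
by have := minimal _ _ _ rep'; rewrite ltnn.
Qed.

Lemma mulmx_deltaE p q s t (X : 'M[C]_(p, q)) (Z : 'M[C]_(s, t)) a b i j :
  (X *m delta_mx a b *m Z) i j = X i a * Z b j.
Proof.
by rewrite -(mul_delta_mx (0 : 'I_1)) mulmxA -colE -mulmxA -rowE mxE big_ord1 !mxE.
Qed.

(* Testing the form against [V = delta_mx a b] gives, entrywise, an F-linear
   relation among the [Cs l] whose coefficients are those of a row of [G] times [H]. *)
Lemma hill_form_eq0 n m (H : 'M[C]_m) (G Cs : 'I_m -> 'M[C]_n) :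
  mxF r H -> H \in unitmx -> (forall k, mxF r (G k)) -> freeF r Cs ->
  (forall V, mxF r V ->
     \sum_k \sum_l H k l *: (G k *m V *m mxstar (Cs l)) = 0) ->
  forall k, G k = 0.
Proof.
move=> HF H_unit GF Cs_free form0 k; apply/matrixP=> i a; rewrite mxE.
pose g : 'rV_m := \row_k G k i a.
suff gH0 : g *m H = 0.
  have /rowP/(_ k) := congr1 (mulmx^~ (invmx H)) gH0.
  by rewrite mulmxK // mul0mx !mxE.
apply/rowP=> l; rewrite [RHS]mxE; apply/eqP; rewrite -conjC_eq0; apply/eqP.
apply: (Cs_free (fun l => ((g *m H) 0 l)^*)) => [l'|].
  by apply/inF_conj/mxF_mul => // ? ?; rewrite mxE; apply: GF.
apply: (can_inj (@mxstarK C _ _)); rewrite mxstar_sum mxstar0.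
apply/matrixP=> b j; have /matrixP/(_ i j) := form0 _ (@mxF_delta C r _ _ a b).
rewrite !mxE => <-; rewrite !summxE.
under [RHS]eq_bigr do rewrite summxE.
rewrite [RHS]exchange_big /=; apply: eq_bigr => l' _.
rewrite mxstarZ conjCK !mxE mulr_suml; apply: eq_bigr => k' _.
by rewrite [RHS]mxE mulmx_deltaE mxstarE mxE mulrA (mulrC (H k' l')).
Qed.

Lemma min_hill_rep_bicomm n m (A B : 'M[C]_n) (H : 'M[C]_m) (Cs : 'I_m -> 'M[C]_n) :
  bicomm r A B -> min_hill_rep r (lyapAB A B) H Cs -> H \in unitmx ->
  forall k, bicomm r (mxstar A) (Cs k).
Proof.
move=> [_ cB] hmin H_unit; have [[HF [CsF PhiE]] _] := hmin.
move=> k; split=> [|Y YF YA]; first exact: CsF.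
have YB : Y *m mxstar B = mxstar B *m Y.
  rewrite -[Y]mxstarK; apply/mxstar_comm/esym/cB; first exact: mxF_star.
  by rewrite -[A]mxstarK; apply: mxstar_comm.
apply/eqP; rewrite -subr_eq0; apply/eqP; move: k.
apply: (hill_form_eq0 HF H_unit _ (min_hill_rep_free hmin)) => [k|V VF].
  by apply: mxF_sub; apply: mxF_mul.
transitivity (lyapAB A B (Y *m V) - Y *m lyapAB A B V);
  last by rewrite lyapAB_mull // subrr.
rewrite (PhiE (Y *m V)); last exact: mxF_mul.
rewrite (PhiE V) // mulmx_sumr -sumrB; apply: eq_bigr => k _.
rewrite mulmx_sumr -sumrB; apply: eq_bigr => l _.
by rewrite -scalemxAr -scalerBr !mulmxBl !mulmxA.
Qed.

End HillRepresentation.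

Section BicommutantSpan.
Variables (C : numClosedFieldType) (r : bool).

(* Unlike [in_span_CI], the coefficients range over all of [C]. *)
Definition in_span_starCI n m (Cs : 'I_m -> 'M[C]_n) (X : 'M[C]_n) : Prop :=
  exists (c : 'I_m -> C) (d : C), X = \sum_k c k *: mxstar (Cs k) + d%:M.

Lemma span_CI_star_bicomm n m (A : 'M[C]_n) (Cs : 'I_m -> 'M[C]_n) :
  (forall X, bicomm r (mxstar A) X <-> in_span_CI r Cs X) ->
  forall l, bicomm r A (mxstar (Cs l)).
Proof.
move=> spanE l; apply/bicomm_starK/spanE.
exists (fun k => (k == l)%:R), 0; split=> [k|]; first exact: inF_nat.
split; first exact: inF0.
rewrite (bigD1 l) //= eqxx scale1r big1 ?addr0 => [|k /negbTE ->]; last by rewrite scale0r.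
by apply/matrixP=> i j; rewrite !mxE mul0rn addr0.
Qed.

Lemma span_CI_bicomm_span n m (A : 'M[C]_n) (Cs : 'I_m -> 'M[C]_n) :
  (forall X, bicomm r (mxstar A) X <-> in_span_CI r Cs X) ->
  forall X, bicomm r A X -> in_span_starCI Cs X.
Proof.
move=> spanE X /bicomm_star /spanE [c [d [_ [_ XE]]]].
exists (fun k => (c k)^*), d^*.
rewrite -[X]mxstarK XE mxstarD mxstar_sum mxstar_scalar; congr (_ + _).
by apply: eq_bigr => k _; rewrite mxstarZ.
Qed.

Lemma dimF_bicomm_span n m (A : 'M[C]_n) (Cs : 'I_m -> 'M[C]_n) :
  dimF_is r (bicomm r A) m -> (forall l, bicomm r A (mxstar (Cs l))) ->
  freeF r Cs -> forall X, bicomm r A X -> in_span_starCI Cs X.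
Proof.
move=> dimA CsA Cs_free X /(dimF_span dimA CsA (freeF_star Cs_free)) [c XE].
by exists c, 0; rewrite XE raddf0 addr0.
Qed.

End BicommutantSpan.

Section KernelInclusion.
Variable C : numClosedFieldType.

Definition sandwich n k (Rs : 'I_k -> 'M[C]_n) (xs : 'I_k -> 'cV[C]_n)
    (X : 'M[C]_n) : 'cV[C]_n :=
  \sum_j Rs j *m X *m xs j.

Lemma sandwich_mull n k (Rs : 'I_k -> 'M[C]_n) (xs : 'I_k -> 'cV[C]_n) (A X : 'M[C]_n) :
  sandwich (fun j => Rs j *m A) xs X = sandwich Rs xs (A *m X).
Proof. by apply: eq_bigr => j _; rewrite !mulmxA. Qed.

Lemma sandwich_span n m k (Rs : 'I_k -> 'M[C]_n) (xs : 'I_k -> 'cV[C]_n)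
    (Cs : 'I_m -> 'M[C]_n) (X : 'M[C]_n) :
  in_span_starCI Cs X -> sandwich Rs xs 1%:M = 0 ->
  (forall l, sandwich Rs xs (mxstar (Cs l)) = 0) -> sandwich Rs xs X = 0.
Proof.
move=> [c [d ->]] one0 star0.
transitivity (\sum_l c l *: sandwich Rs xs (mxstar (Cs l)) + d *: sandwich Rs xs 1%:M).
  rewrite /sandwich scaler_sumr.
  under eq_bigr do
    rewrite mulmxDr mulmxDl mulmx_sumr mulmx_suml -scalemx1 -!scalemxAr -scalemxAl.
  rewrite big_split /= exchange_big; congr (_ + _); apply: eq_bigr => l _.
  by rewrite scaler_sumr; apply: eq_bigr => j _; rewrite -scalemxAr -scalemxAl.
by rewrite one0 scaler0 addr0 big1 // => l _; rewrite star0 scaler0.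
Qed.

Lemma sum_mxtens_index m n (F : 'I_(m * n) -> C) :
  \sum_t F t = \sum_i \sum_a F (mxtens_index (i, a)).
Proof.
rewrite (reindex (@mxtens_index m n)) /=; last first.
  by exists (@mxtens_unindex m n) => t _; rewrite (mxtens_indexK, mxtens_unindexK).
by rewrite pair_big /=; apply: eq_bigr => -[i a] _.
Qed.

Lemma sum_col_mx p q s k (U : 'I_k -> 'M[C]_(p, s)) (V : 'I_k -> 'M[C]_(q, s)) :
  \sum_j col_mx (U j) (V j) = col_mx (\sum_j U j) (\sum_j V j).
Proof.
apply: (big_ind3 (fun X Y Z => X = col_mx Y Z)) => [|? ? ? ? ? ? -> ->|//].
  by rewrite col_mx0.
by rewrite add_col_mx.
Qed.

Lemma mul_mxrow_col_mx n p q s k (U : 'I_k -> 'M[C]_(p, n)) (V : 'I_k -> 'M[C]_(q, n))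
    (x : 'M[C]_(\sum_(j < k) n, s)) :
  (\mxrow_j col_mx (U j) (V j)) *m x =
  col_mx (\sum_j U j *m submxcol x j) (\sum_j V j *m submxcol x j).
Proof.
rewrite -[x in LHS]submxcolK mul_mxrow_mxcol -sum_col_mx.
by apply: eq_bigr => j _; rewrite mul_col_mx.
Qed.

Lemma stack_sandwichE n m k (P : 'M[C]_m) (Cs : 'I_m -> 'M[C]_n)
    (Gs : 'I_k -> 'M[C]_n) (ys : 'I_k -> 'cV[C]_n) i a :
  (\sum_j (P *t Gs j) *m stackC Cs *m ys j) (mxtens_index (i, a)) 0 =
  \sum_l P i l * sandwich Gs ys (mxstar (Cs l)) a 0.
Proof.
rewrite summxE; under eq_bigr do rewrite -mulmxA mxE sum_mxtens_index.
rewrite exchange_big; apply: eq_bigr => l _; rewrite summxE mulr_sumr.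
apply: eq_bigr => j _; rewrite -mulmxA mxE mulr_sumr; apply: eq_bigr => b _.
rewrite tensmxE -mulrA; congr (_ * (_ * _)).
by rewrite !mxE; apply: eq_bigr => c _; rewrite !mxE mxtens_indexK.
Qed.

Lemma mulmx_LRs_eq0 n m k (P : 'M[C]_m) (Cs : 'I_m -> 'M[C]_n) (Rs : 'I_k -> 'M[C]_n)
    (x : 'cV[C]_(\sum_(j < k) n)) :
  P \in unitmx -> LRs P Cs Rs *m x = 0 ->
  sandwich Rs (submxcol x) 1%:M = 0 /\
  forall l, sandwich Rs (submxcol x) (mxstar (Cs l)) = 0.
Proof.
move=> P_unit; rewrite mul_mxrow_col_mx => /eqP; rewrite col_mx_eq0.
case/andP=> /eqP top0 /eqP bot0; split.
  by rewrite -[RHS]top0 /sandwich; apply: eq_bigr => j _; rewrite mulmx1.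
pose W : 'M[C]_(m, n) := \matrix_(l, a) sandwich Rs (submxcol x) (mxstar (Cs l)) a 0.
have PW0 : P *m W = 0.
  apply/matrixP=> i a; have /matrixP/(_ (mxtens_index (i, a)) 0) := bot0.
  rewrite stack_sandwichE !mxE => sum0; rewrite -[RHS]sum0.
  by apply: eq_bigr => l _; rewrite mxE.
have W0 : W = 0 by rewrite -(mulKmx P_unit W) PW0 mulmx0.
move=> l; apply/colP=> a; have /matrixP/(_ l a) := W0.
by rewrite !mxE.
Qed.

Lemma mulmx_MRs_eq0 n m k (A B : 'M[C]_n) (P : 'M[C]_m) (Cs : 'I_m -> 'M[C]_n)
    (Rs : 'I_k -> 'M[C]_n) (x : 'cV[C]_(\sum_(j < k) n)) :
  sandwich Rs (submxcol x) B = 0 ->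
  (forall l, sandwich Rs (submxcol x) (A *m mxstar (Cs l)) = 0) ->
  MRs A B P Cs Rs *m x = 0.
Proof.
move=> B0 AC0; rewrite mul_mxrow_col_mx; apply/eqP; rewrite col_mx_eq0; apply/andP.
split; apply/eqP; first by rewrite -[RHS]B0.
under eq_bigr do rewrite mulNmx.
rewrite sumrN; apply/eqP; rewrite oppr_eq0; apply/eqP/colP=> t.
case: (mxtens_indexP t) => i a; rewrite stack_sandwichE mxE.
by apply: big1 => l _; rewrite sandwich_mull AC0 mxE mulr0.
Qed.

End KernelInclusion.

Theorem lemma6p4 (C : numClosedFieldType) (realF : bool) (n m : nat)
    (A B : 'M[C]_n) (H : 'M[C]_m) (Cs : 'I_m -> 'M[C]_n) (P : 'M[C]_m) :
  mxF realF A -> mxF realF B ->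
  lyap_regular A ->
  CL realF A B -> bicomm realF A B ->
  min_hill_rep realF (lyapAB A B) H Cs ->
  mxF realF P -> P \in unitmx -> H = mxstar P *m P ->
  ((forall X, bicomm realF (mxstar A) X <-> in_span_CI realF Cs X) \/
   dimF_is realF (bicomm realF A) m) ->
  forall (k : nat) (Rs : 'I_k -> 'M[C]_n), (forall j, mxF realF (Rs j)) ->
  forall x : 'cV[C]_(\sum_(j < k) n), mxF realF x ->
    LRs P Cs Rs *m x = 0 -> MRs A B P Cs Rs *m x = 0.
Proof.
(* Lyapunov regularity and B \in C_L(A) only serve, in the paper, to make H
   positive definite; here H = P^* P with P invertible is assumed outright. *)
move=> AF _ _ _ AB hmin _ P_unit HE span_or_dim k Rs _ x _ Lx0.
have H_unit : H \in unitmx by rewrite HE unitmx_mul unitmx_star P_unit.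
have CsA l : bicomm realF A (mxstar (Cs l)).
  case: span_or_dim => [spanE|_]; first exact: span_CI_star_bicomm spanE l.
  exact/bicomm_starK/(min_hill_rep_bicomm AB hmin H_unit).
have spanA X : bicomm realF A X -> in_span_starCI Cs X.
  case: span_or_dim => [spanE|dimA]; first exact: span_CI_bicomm_span spanE X.
  exact: dimF_bicomm_span dimA CsA (min_hill_rep_free hmin) X.
have [one0 star0] := mulmx_LRs_eq0 P_unit Lx0.
apply: mulmx_MRs_eq0 => [|l]; first exact: sandwich_span (spanA _ AB) one0 star0.
exact: sandwich_span (spanA _ (bicomm_mul (bicomm_refl AF) (CsA l))) one0 star0.
Qed.
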